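(* Let $N\ge1$, $f:\mathbb{N}^N\to\mathbb{N}$, $p$ a prime, $n$ a nonnegative integer and $\mathbf{m}\in\mathbb{N}^N$. Then $\binom{np}{p\mathbf{m}}_f\equiv\binom{n}{\mathbf{m}}_f\pmod p$.
   Context: $\mathbb{N}=\{0,1,2,\dots\}$. For $k\ge0$ and $\mathbf{x}\in\mathbb{N}^N$, $\binom{k}{\mathbf{x}}_f=\sum_{\mathbf{m}_1+\cdots+\mathbf{m}_k=\mathbf{x}} f(\mathbf{m}_1)\cdots f(\mathbf{m}_k)$ over tuples of vectors in $\mathbb{N}^N$. *)

From mathcomp Require Import all_boot.
Set Implicit Arguments. Unset Strict Implicit. Unset Printing Implicit Defensive.

Notation natvec N := {ffun 'I_N -> nat}.

(* binom_f(k, x) = sum over k-tuples (m_1,...,m_k) of vectors in N^N with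
   m_1 + ... + m_k = x of f(m_1) * ... * f(m_k).
   Every such tuple has all coordinates <= max_j x_j =: M, so we may range
   over tuples of vectors with coordinates in 'I_(M+1) without loss. *)
Definition gbinom (N : nat) (f : natvec N -> nat) (k : nat) (x : natvec N) : nat :=
  let M := \max_(j < N) x j in
  \sum_(t : {ffun 'I_k -> {ffun 'I_N -> 'I_M.+1}}
          | [forall j : 'I_N, \sum_(i < k) (t i j : nat) == x j])
     \prod_(i < k) f [ffun j => (t i j : nat)].

From mathcomp Require Import all_boot all_fingroup all_solvable.
Set Implicit Arguments. Unset Strict Implicit. Unset Printing Implicit Defensive.

(* Split the n*p summation indices into n blocks of size p and let Z/p rotate
   every block simultaneously.  The rotation permutes the compositions of p*m
   and preserves their weights, so modulo p only the fixed compositions count.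
   A fixed composition repeats one n-tuple (m_1, ..., m_n) in every position of
   a block; it sums to p*m iff the n-tuple sums to m, and its weight is
   (f m_1 * ... * f m_n)^p, which is f m_1 * ... * f m_n mod p by Fermat. *)

Lemma sum_nat_levels (T : finType) (A : {set T}) (w : T -> nat) K :
  (forall x, w x <= K) ->
  \sum_(x in A) w x = \sum_(v < K) #|[set x in A | v < w x]|.
Proof.
move=> wK; have levels x : w x = \sum_(v < K) (v < w x).
  rewrite -[w x in LHS]card_ord -sum1_card.
  rewrite (big_ord_widen_cond K xpredT (fun=> 1) (wK x)) big_mkcond /=.
  by apply: eq_bigr => v _; case: (v < w x).
rewrite (eq_bigr _ (fun x _ => levels x)) exchange_big; apply: eq_bigr => v _.
by rewrite -big_mkcondr -sum1_card; apply: eq_bigl => x; rewrite !inE.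
Qed.

Section WeightedFixMod.
Local Open Scope group_scope.
Variables (aT : finGroupType) (sT : finType) (D : {group aT}) (to : action D sT).

Lemma pgroup_fix_sum_mod (p : nat) (G : {group aT}) (S : {set sT}) (w : sT -> nat) :
  p.-group G -> [acts G, on S | to] -> {in G, forall a x, w (to x a) = w x} ->
  \sum_(x in S) w x = \sum_(x in 'Fix_(S | to)(G)) w x %[mod p].
Proof.
(* Every level set [set x in S | v < w x] is G-stable, and w x is the number
   of level sets containing x. *)
move=> pG nSG wG; have sGD : G \subset D := acts_dom nSG.
have wK x : w x <= \max_y w y by apply: leq_bigmax.
rewrite !(sum_nat_levels _ wK) -modn_summ -[RHS]modn_summ; congr (_ %% p).
apply: eq_bigr => v _.
have nLG : [acts G, on [set x | v < w x] | to].
  apply/subsetP => a Ga; rewrite !inE (subsetP sGD) //=.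
  by apply/subsetP => x; rewrite !inE wG.
have -> : [set x in S | v < w x] = S :&: [set x | v < w x].
  by apply/setP => x; rewrite !inE.
rewrite (pgroup_fix_mod pG (actsI nSG nLG)); congr (_ %% p); apply: eq_card => x.
by rewrite !inE andbAC.
Qed.

End WeightedFixMod.

Lemma val_iter_ordS n k (i : 'I_n) : val (iter k (@ordS n) i) = (i + k) %% n.
Proof.
elim: k => [|k IHk] /=; first by rewrite addn0 modn_small.
by rewrite IHk -addn1 modnDml -addnA addn1.
Qed.

Lemma iter_ordS_id n (i : 'I_n) : iter n (@ordS n) i = i.
Proof. by apply: val_inj; rewrite val_iter_ordS modnDr modn_small. Qed.

Section BlockRotation.
Variables (n p : nat) (V : finType).
Implicit Types (t : {ffun 'I_n * 'I_p -> V}) (s : {ffun 'I_n -> V}).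

Definition block_shift (ab : 'I_n * 'I_p) := (ab.1, ordS ab.2).

Lemma block_shift_inj : injective block_shift.
Proof.
by apply: (can_inj (g := fun ab => (ab.1, ord_pred ab.2))) => -[a b] /=; rewrite ordSK.
Qed.

Definition rotate_blocks t := [ffun ab => t (block_shift ab)].

Definition inflate s : {ffun 'I_n * 'I_p -> V} := [ffun ab => s ab.1].

Lemma rotate_blocks_inj : injective rotate_blocks.
Proof.
move=> t t' /ffunP eq_tt'; apply/ffunP => -[a b].
have := eq_tt' (a, ord_pred b); rewrite !ffunE /block_shift /=.
by rewrite ord_predK.
Qed.

Definition rotate_perm := perm rotate_blocks_inj.

Lemma rotate_permX k t :
  (rotate_perm ^+ k)%g t =
  [ffun ab : 'I_n * 'I_p => t (ab.1, iter k (@ordS p) ab.2)].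
Proof.
rewrite permX; elim: k t => [|k IHk] t; first by apply/ffunP => -[a b]; rewrite ffunE.
by rewrite iterSr IHk; apply/ffunP => -[a b]; rewrite /rotate_perm permE !ffunE.
Qed.

Lemma pgroup_rotate_perm : prime p -> (p.-group <[rotate_perm]>)%g.
Proof.
move=> p_pr; rewrite /pgroup -orderE; apply: pnat_dvd (pnat_id p_pr).
rewrite order_dvdn; apply/eqP/permP => t; rewrite perm1 rotate_permX.
by apply/ffunP => -[a b]; rewrite ffunE iter_ordS_id.
Qed.

Lemma rotate_blocks_fixed t (b0 : 'I_p) :
  val b0 = 0 -> rotate_blocks t = t -> t = inflate [ffun a => t (a, b0)].
Proof.
move=> b0_0 fix_t; apply/ffunP => -[a b]; rewrite !ffunE /=.
have iter_fix k : t (a, iter k (@ordS p) b0) = t (a, b0).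
  by elim: k => //= k <-; rewrite -[in RHS]fix_t ffunE.
have reach_b : iter b (@ordS p) b0 = b.
  by apply: val_inj; rewrite val_iter_ordS b0_0 add0n modn_small.
by rewrite -[in LHS]reach_b iter_fix.
Qed.

Lemma sum_rotate_fixed (P : pred {ffun 'I_n * 'I_p -> V}) (F : _ -> nat) :
  0 < p ->
  \sum_(t | P t && (rotate_blocks t == t)) F t =
  \sum_(s | P (inflate s)) F (inflate s).
Proof.
move=> p_gt0; pose b0 := Ordinal p_gt0.
rewrite (reindex_onto inflate (fun t => [ffun a => t (a, b0)])) /=; last first.
  by move=> t /andP[_ /eqP/(rotate_blocks_fixed (erefl : val b0 = 0))] <-.
apply: eq_bigl => s.
have -> : rotate_blocks (inflate s) = inflate s by apply/ffunP => ab; rewrite !ffunE.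
have -> : [ffun a => inflate s (a, b0)] = s by apply/ffunP => a; rewrite !ffunE.
by rewrite !eqxx !andbT.
Qed.

Section BigBlocks.
Variables (R : Type) (idx : R) (op : Monoid.com_law idx) (F : V -> R).

Lemma big_rotate_blocks t :
  \big[op/idx]_ab F (rotate_blocks t ab) = \big[op/idx]_ab F (t ab).
Proof.
by rewrite [RHS](reindex_inj block_shift_inj); apply: eq_bigr => ab _; rewrite ffunE.
Qed.

Lemma big_inflate s :
  \big[op/idx]_ab F (inflate s ab) =
  \big[op/idx]_(b : 'I_p) \big[op/idx]_a F (s a).
Proof.
by rewrite exchange_big pair_bigA; apply: eq_bigr => ab _; rewrite ffunE.
Qed.

End BigBlocks.

End BlockRotation.

Section BoundedGbinom.
Variables (N : nat) (f : natvec N -> nat).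
Implicit Types x : natvec N.
Local Notation vec B := {ffun 'I_N -> 'I_B.+1}.
Local Notation tuples I B := {ffun I -> vec B}.

Definition bounded_gbinom (I : finType) B (x : natvec N) :=
  \sum_(t : tuples I B | [forall j, \sum_(i : I) (t i j : nat) == x j])
     \prod_(i : I) f [ffun j => (t i j : nat)].

Lemma gbinomE k x : gbinom f k x = bounded_gbinom 'I_k (\max_(j < N) x j) x.
Proof. by []. Qed.

Lemma bounded_gbinom_widen (I : finType) B1 B2 x :
  (forall j, x j <= B1) -> B1 <= B2 -> bounded_gbinom I B1 x = bounded_gbinom I B2 x.
Proof.
move=> x_le_B1 le_B12; have le_B12S : B1 < B2.+1 by [].
pose widen (t : tuples I B1) : tuples I B2 :=
  [ffun i => [ffun j => widen_ord le_B12S (t i j)]].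
pose narrow (t : tuples I B2) : tuples I B1 :=
  [ffun i => [ffun j => inord (t i j)]].
rewrite /bounded_gbinom [RHS](reindex_onto widen narrow) /=; last first.
  move=> t /forallP sum_t; apply/ffunP => i; apply/ffunP => j; apply: val_inj.
  rewrite !ffunE /= inordK // ltnS; apply: leq_trans (x_le_B1 j).
  by move/eqP: (sum_t j) => <-; rewrite (bigD1 i) //= leq_addr.
apply: eq_big => [t|t _].
  have -> : narrow (widen t) = t.
    by apply/ffunP => i; apply/ffunP => j; apply: val_inj; rewrite !ffunE /= inordK.
  rewrite eqxx andbT; apply: eq_forallb => j.
  by under [in RHS]eq_bigr do rewrite !ffunE.
by apply: eq_bigr => i _; congr f; apply/ffunP => j; rewrite !ffunE.
Qed.

Lemma bounded_gbinom_card (I J : finType) B x :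
  #|I| = #|J| -> bounded_gbinom I B x = bounded_gbinom J B x.
Proof.
move=> cardIJ.
pose g (i : I) : J := enum_val (cast_ord cardIJ (enum_rank i)).
pose g' (j : J) : I := enum_val (cast_ord (esym cardIJ) (enum_rank j)).
have gK : cancel g g' by move=> i; rewrite /g /g' enum_valK cast_ordK enum_rankK.
have g'K : cancel g' g by move=> j; rewrite /g /g' enum_valK cast_ordKV enum_rankK.
have g_bij : {on predT, bijective g} := onW_bij _ (Bijective gK g'K).
pose h (t : tuples J B) : tuples I B := [ffun i => t (g i)].
rewrite /bounded_gbinom (reindex h) /=; last first.
  by exists (fun u => [ffun j => u (g' j)]) => u _;
    apply/ffunP => ?; rewrite !ffunE ?gK ?g'K.
apply: eq_big => [t|t _].
  apply: eq_forallb => j; rewrite [in RHS](reindex g g_bij).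
  by under eq_bigr do rewrite ffunE.
by rewrite [RHS](reindex g g_bij); apply: eq_bigr => i _; rewrite ffunE.
Qed.

Lemma bounded_gbinom_blocks n p B (m : natvec N) :
  prime p ->
  bounded_gbinom ('I_n * 'I_p)%type B [ffun j => p * m j] =
  bounded_gbinom 'I_n B m %[mod p].
Proof.
move=> p_pr; have p_gt0 := prime_gt0 p_pr.
pose rot := rotate_perm n p (vec B).
pose S := [set t : tuples ('I_n * 'I_p)%type B |
            [forall j, \sum_ab (t ab j : nat) == p * m j]].
pose fv (v : vec B) := f [ffun j => (v j : nat)].
pose w (t : tuples ('I_n * 'I_p)%type B) := \prod_ab fv (t ab).
have w_rot t : w (rot t) = w t by rewrite permE /w big_rotate_blocks.
have wG : {in <[rot]>%g, forall a t, w (aperm t a) = w t}.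
  move=> _ /cycleP[k ->] t; rewrite apermE permX.
  by elim: k => //= k IHk; rewrite w_rot.
have nSG : [acts <[rot]>%g, on S | 'P].
  rewrite cycle_subG; apply/astabsP => t; rewrite /= apermE permE !inE.
  apply: eq_forallb => j.
  by rewrite (big_rotate_blocks _ (fun v : vec B => (v j : nat))).
rewrite /bounded_gbinom (eq_bigl (mem S)); last first.
  by move=> t; rewrite !inE; apply: eq_forallb => j; rewrite ffunE.
rewrite (pgroup_fix_sum_mod (pgroup_rotate_perm n _ p_pr) nSG wG) afix_cycle.
rewrite (eq_bigl (fun t => (t \in S) && (rotate_blocks t == t))); last first.
  by move=> t; rewrite !inE sub1set inE /= apermE permE.
rewrite sum_rotate_fixed // -modn_summ -[RHS]modn_summ; congr (_ %% p).
apply: eq_big => [s|s _].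
  rewrite inE; apply: eq_forallb => j.
  rewrite (big_inflate p _ (fun v : vec B => (v j : nat))).
  by rewrite sum_nat_const card_ord eqn_pmul2l.
by rewrite /w (big_inflate p _ fv) prod_nat_const card_ord fermat_little.
Qed.

End BoundedGbinom.

Theorem theorem8 (N : nat) (hN : 0 < N) (f : {ffun 'I_N -> nat} -> nat)
    (p n : nat) (m : {ffun 'I_N -> nat}) :
  prime p ->
  gbinom f (n * p) [ffun j => p * m j] = gbinom f n m %[mod p].
Proof.
move=> p_pr; rewrite !gbinomE.
have max_m_le : \max_(j < N) m j <= \max_(j < N) [ffun j => p * m j] j.
  apply/bigmax_leqP => j _; apply: leq_trans (leq_bigmax j).
  by rewrite ffunE leq_pmull ?prime_gt0.
rewrite (bounded_gbinom_widen _ _ (fun j => leq_bigmax j) max_m_le).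
rewrite (bounded_gbinom_card _ _ _ (_ : #|'I_(n * p)| = #|{: 'I_n * 'I_p}|)).
  exact: bounded_gbinom_blocks.
by rewrite card_prod !card_ord.
Qed.
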